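(* Let $(X,\pi)$ be a finite symmetric two-player game with relative payoff game $(X,\Delta)$. If $(X,\Delta)$ is an exact potential game, then imitation is essentially unbeatable.
   Context: $\pi(x,y)$ is the payoff of the player choosing $x$ against $y$; $\Delta(x,y)=\pi(x,y)-\pi(y,x)$. The symmetric game $(X,\Delta)$ is an exact potential game if there is $P:X\times X\to\mathbb{R}$ such that for all $y,x,x'\in X$: $\Delta(x,y)-\Delta(x',y)=P(x,y)-P(x',y)$ and $\Delta(x,y)-\Delta(x',y)=P(y,x)-P(y,x')$. Let $\hat\Delta:=\max_{x,y\in X}\Delta(x,y)$. Imitate-the-best: given initial $y_0\in X$ and any opponent sequence $(x_t)_{t\ge0}$, $y_t=x_{t-1}$ if $\Delta(x_{t-1},y_{t-1})>0$ and $y_t=y_{t-1}$ otherwise. Imitation is essentially unbeatable if for every $y_0\in X$ and every sequence $(x_t)$, $\limsup_{T\to\infty}\sum_{t=0}^T\Delta(x_t,y_t)\le\hat\Delta$. *)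

From HB Require Import structures.
From mathcomp Require Import all_boot all_order all_algebra.
From mathcomp Require Import all_classical all_reals all_analysis.
Set Implicit Arguments. Unset Strict Implicit. Unset Printing Implicit Defensive.
Import Order.TTheory GRing.Theory Num.Theory.
Local Open Scope ring_scope.

Section Game.
Variables (R : realType) (X : finType).

Definition rel_payoff (pi : X -> X -> R) (x y : X) : R := pi x y - pi y x.

Definition exact_potential_game (D : X -> X -> R) : Prop :=
  exists P : X -> X -> R, forall y x x' : X,
    D x y - D x' y = P x y - P x' y /\
    D x y - D x' y = P y x - P y x'.

(* hat Delta = max_{x,y} D(x,y).  Since rel_payoff x x = 0, folding Num.max
   with initial value 0 gives exactly the maximum when X is nonempty. *)
Definition max_payoff (D : X -> X -> R) : R :=
  \big[Num.max/0]_(p : X * X) D p.1 p.2.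

Fixpoint imitate (D : X -> X -> R) (y0 : X) (xs : nat -> X) (t : nat) : X :=
  match t with
  | 0 => y0
  | t'.+1 => let y := imitate D y0 xs t' in
             if 0 < D (xs t') y then xs t' else y
  end.

Definition essentially_unbeatable (D : X -> X -> R) : Prop :=
  forall (y0 : X) (xs : nat -> X),
    (limn_esup (fun T : nat =>
        ((\sum_(0 <= t < T.+1) D (xs t) (imitate D y0 xs t))%:E))
     <= (max_payoff D)%:E)%E.

End Game.

(** Idea: in an exact potential game the relative payoff is a potential
    difference, [Delta x y = g x - g y].  Imitate-the-best only moves when the
    opponent's last payoff was positive, and then the imitator's payoff of that
    round is the potential step [g x - g y] it is about to climb; in every other
    round its payoff is nonpositive.  So the cumulative relative payoff up to
    time [T] is at most [g y_T - g y_0], itself a single value of [Delta],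
    hence at most [hat Delta], uniformly in [T]. *)
From HB Require Import structures.
From mathcomp Require Import all_boot all_order all_algebra.
From mathcomp Require Import all_classical all_reals all_analysis.
From mathcomp Require Import lra.
Import Order.TTheory GRing.Theory Num.Theory.
Local Open Scope ring_scope.

Lemma limn_esup_le_ub (R : realType) (u : (\bar R)^nat) (l : \bar R) :
  (forall n, u n <= l)%E -> (limn_esup u <= l)%E.
Proof.
move=> ul; rewrite limn_esup_lim; apply: lime_le; first exact: is_cvg_esups.
by apply: nearW => n; apply: ge_ereal_sup => _ [m _ <-].
Qed.

Section RelativePayoff.
Variables (R : realType) (X : finType).

Lemma rel_payoffNC (pi : X -> X -> R) x y :
  rel_payoff pi y x = - rel_payoff pi x y.
Proof. by rewrite /rel_payoff opprB. Qed.

Lemma rel_payoff_potential_difference (pi : X -> X -> R) :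
  exact_potential_game (rel_payoff pi) ->
  exists g : X -> R, forall x y, rel_payoff pi x y = g x - g y.
Proof.
move=> [P HP]; exists (fun x => P x x / 2) => x y.
have D0 z : rel_payoff pi z z = 0 by rewrite /rel_payoff subrr.
have [Pxy_yy Pyx_yy] := HP y x y.
have [Pyx_xx _] := HP x y x.
rewrite D0 subr0 in Pxy_yy Pyx_yy.
rewrite D0 subr0 rel_payoffNC in Pyx_xx.
(* The two potential identities force [P x y = P y x]; then
   [Delta x y = P x y - P y y] and [- Delta x y = P x y - P x x]. *)
lra.
Qed.

End RelativePayoff.

Section Imitation.
Variables (R : realType) (X : finType) (D : X -> X -> R).

Lemma le_max_payoff a b : D a b <= max_payoff D.
Proof. by rewrite /max_payoff (bigD1 (a, b)) //= le_max lexx. Qed.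

Lemma imitate_sum_le_potential_gain (g : X -> R) y0 xs T :
  (forall x y, D x y = g x - g y) ->
  \sum_(0 <= t < T) D (xs t) (imitate D y0 xs t)
    <= g (imitate D y0 xs T) - g y0.
Proof.
move=> Dg; elim: T => [|T IH]; first by rewrite big_geq // subrr.
rewrite big_nat_recr //=; case: ifP => [_|Dnpos].
- by move: IH; rewrite Dg; lra.
- have : D (xs T) (imitate D y0 xs T) <= 0 by rewrite leNgt Dnpos.
  by move: IH; lra.
Qed.

Lemma imitate_sum_le_max_payoff (g : X -> R) y0 xs T :
  (forall x y, D x y = g x - g y) ->
  \sum_(0 <= t < T) D (xs t) (imitate D y0 xs t) <= max_payoff D.
Proof.
move=> Dg; rewrite (le_trans (imitate_sum_le_potential_gain g y0 xs T Dg)) //.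
by rewrite -Dg; apply: le_max_payoff.
Qed.

End Imitation.

Theorem corollary5 (R : realType) (X : finType) (pi : X -> X -> R) :
  exact_potential_game (rel_payoff pi) ->
  essentially_unbeatable (rel_payoff pi).
Proof.
move=> /rel_payoff_potential_difference [g Dg] y0 xs.
apply: limn_esup_le_ub => T; rewrite lee_fin.
exact: imitate_sum_le_max_payoff Dg.
Qed.
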